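(* Assume $r_0\ge0$ and $\mathbb P\{t(e)=r_0\}<p_c$. Let $\delta>0$ be a constant for which there exist $C,c_1>0$ such that for all $n\in\mathbb N$, $$\mathbb P\Big\{\exists\text{ self-avoiding path }\gamma\text{ from }0\text{ with }|\gamma|\ge n\text{ and }\sum_{e\in\gamma}(t(e)-r_0)\le\delta|\gamma|\Big\}\le Ce^{-c_1n}.$$ Then there exists $s>0$ such that $\mathbb E[e^{sA^{(b)}}]<\infty$ for all $b\ge-r_0-\delta$, where $A^{(b)}=2\sup_{x\in\mathbb Z^d}(T^{(b)}_{0,x})^-$.
   Context: Let $d\ge2$. The weights $\{t(e)\}$ on the undirected nearest-neighbor edges of $\mathbb Z^d$ are i.i.d. real. Set $r_0=\operatorname{ess\,inf}t(e)$, and let $p_c$ be the Bernoulli bond percolation threshold on $\mathbb Z^d$. $|\gamma|$ is the number of edges of a path $\gamma$. $T^{(b)}_{0,x}$ is the infimum of $\sum_{e\in\pi}(t(e)+b)$ over self-avoiding nearest-neighbor paths $\pi$ from $0$ to $x$. For a real $s$, $s^-=(-s)\vee0$. *)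

From HB Require Import structures.
From mathcomp Require Import all_boot all_order all_algebra.
From mathcomp Require Import all_classical all_reals all_analysis ess_sup_inf.
Set Implicit Arguments. Unset Strict Implicit. Unset Printing Implicit Defensive.
Import Order.TTheory GRing.Theory Num.Theory.
Import numFieldNormedType.Exports.
Local Open Scope classical_set_scope.
Local Open Scope ring_scope.

Definition vtx (d : nat) := 'rV[int]_d.
Definition origin (d : nat) : vtx d := 0.
Definition unitv (d : nat) (i : 'I_d) : vtx d := delta_mx 0 i.
(** Undirected nearest-neighbour edges of Z^d: the pair (x, i) is the edge
    {x, x + e_i}; every undirected edge has exactly one such representation. *)
Definition edge (d : nat) := (vtx d * 'I_d)%type.
(** A step of a nearest-neighbour path: a direction i and a sign
    (true = +e_i, false = -e_i). *)
Definition step (d : nat) := ('I_d * bool)%type.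

Definition move d (x : vtx d) (st : step d) : vtx d :=
  if st.2 then x + unitv st.1 else x - unitv st.1.

Definition step_edge d (x : vtx d) (st : step d) : edge d :=
  if st.2 then (x, st.1) else (x - unitv st.1, st.1).

(** A nearest-neighbour path started at x is encoded by its list of steps s;
    its vertex sequence is [traj x s], it has |gamma| = size s edges, and
    it ends at [endpt x s]. *)
Definition traj d (x : vtx d) (s : seq (step d)) : seq (vtx d) :=
  x :: scanl (@move d) x s.
Definition endpt d (x : vtx d) (s : seq (step d)) : vtx d :=
  foldl (@move d) x s.
Definition self_avoiding d (x : vtx d) (s : seq (step d)) : bool :=
  uniq (traj x s).

Fixpoint psum d (R : realType) (w : edge d -> R) (x : vtx d) (s : seq (step d)) : R :=
  match s with
  | [::] => 0
  | st :: s' => w (step_edge x st) + psum w (move x st) s'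
  end.

Fixpoint path_all d (P : edge d -> Prop) (x : vtx d) (s : seq (step d)) : Prop :=
  match s with
  | [::] => True
  | st :: s' => P (step_edge x st) /\ path_all P (move x st) s'
  end.

Definition indep_events (R : realType) (dT : measure_display) (T : measurableType dT)
  (P : probability T R) (I : eqType) (A : I -> set T) : Prop :=
  forall J : seq I, uniq J ->
    P (\bigcap_(i in [set i | i \in J]) A i) = (\prod_(i <- J) fine (P (A i)))%:E.

Definition indep_rvs (R : realType) (dT : measure_display) (T : measurableType dT)
  (P : probability T R) (I : eqType) (X : I -> T -> R) : Prop :=
  forall (B : I -> set R), (forall i, measurable (B i)) ->
    indep_events P (fun i => X i @^-1` B i).

Definition iid (R : realType) (dT : measure_display) (T : measurableType dT)
  (P : probability T R) (I : eqType) (X : I -> T -> R) : Prop :=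
  (forall i, measurable_fun setT (X i)) /\
  indep_rvs P X /\
  (forall i j (B : set R), measurable B -> P (X i @^-1` B) = P (X j @^-1` B)).

Definition open_cluster d (open : edge d -> Prop) : set (vtx d) :=
  [set x | exists s : seq (step d), path_all open 0 s /\ endpt 0 s = x].

Definition bond_subcritical (R : realType) (d : nat) (p : R) : Prop :=
  forall (dT : measure_display) (T : measurableType dT) (P : probability T R)
         (O : edge d -> set T),
    (forall e, measurable (O e)) -> (forall e, P (O e) = p%:E) ->
    indep_events P O ->
    P [set w | ~ finite_set (open_cluster (fun e => O e w))] = 0%E.

Definition p_c (R : realType) (d : nat) : R :=
  sup [set p : R | 0 <= p <= 1 /\ bond_subcritical d p].

Definition passage_time d (R : realType) (t : edge d -> R) (b : R) (x : vtx d) : \bar R :=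
  ereal_inf [set (psum (fun e => t e + b) 0 s)%:E |
              s in [set s : seq (step d) | self_avoiding 0 s /\ endpt 0 s = x]].

Definition eneg (R : realType) (y : \bar R) : \bar R := Order.max (- y)%E 0%E.

Definition A_b d (R : realType) (t : edge d -> R) (b : R) : \bar R :=
  (2%:E * ereal_sup [set eneg (passage_time t b x) | x in [set: vtx d]])%E.

From HB Require Import structures.
From mathcomp Require Import all_boot all_order all_algebra.
From mathcomp Require Import all_classical all_reals all_analysis ess_sup_inf.
From mathcomp Require Import measurable_realfun lra ring.
Import Order.TTheory GRing.Theory Num.Theory.
Import numFieldNormedType.Exports.
Local Open Scope classical_set_scope.
Local Open Scope ring_scope.

(* Off the event E_n that some self-avoiding path from 0 with at least n
   edges has (t - r0)-weight at most delta |gamma|, every self-avoiding path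
   has (t + b)-weight at least - delta n: a short path because t >= r0 a.s.
   and b >= - r0 - delta, a long one because it is then even nonnegative.
   Hence A^(b) <= 2 delta n off E_n, so with s = c1 / (4 delta) we get
   exp(s A^(b)) <= sum_n exp(c1 (n + 1) / 2) 1_(E_n), whose expectation is a
   convergent geometric series by P(E_n) <= C exp(- c1 n). *)

Section countable_families.
Context dT (T : measurableType dT) (R : realType).
Variable mu : {measure set T -> \bar R}.

Lemma ae_forall_countable (I : countType) (Q : I -> T -> Prop) :
  (forall i, \forall w \ae mu, Q i w) -> \forall w \ae mu, forall i, Q i w.
Proof.
move=> aeQ.
have : \forall w \ae mu, forall n, if @unpickle I n is Some i then Q i w else True.
  by apply: ae_foralln => n; case: (@unpickle I n) => [i|]; [exact: aeQ | exact: aeW].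
by apply: filterS => w Qw i; have := Qw (pickle i); rewrite pickleK.
Qed.

Lemma ae_ge_ess_inf (I : countType) (X : I -> T -> R) (r : R) :
  (forall i, (r%:E <= ess_inf mu (fun w => (X i w)%:E))%E) ->
  \forall w \ae mu, forall i, r <= X i w.
Proof.
move=> rX; apply: ae_forall_countable => i.
by apply: filterS (ess_inf_le mu _) => w /(le_trans (rX i)); rewrite lee_fin.
Qed.

Lemma measurable_exists (I : countType) (Q : I -> T -> Prop) :
  (forall i, measurable [set w | Q i w]) -> measurable [set w | exists i, Q i w].
Proof.
move=> mQ; rewrite (_ : [set w | exists i, Q i w] = \bigcup_i [set w | Q i w]).
  exact: countable_bigcupT_measurable.
by apply/seteqP; split=> w [i]; [exists i | move=> _; exists i].
Qed.

End countable_families.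

Section exponential_tails.
Context dT (T : measurableType dT) (R : realType).
Variable mu : {measure set T -> \bar R}.
Local Open Scope ereal_scope.

(* Needed because [A_b] is never shown to be measurable: the integral of a
   nonnegative function is a supremum over its simple minorants, whatever its
   measurability. *)
Lemma ge0_le_integral_nonmeasurable {f g : T -> \bar R} :
  (forall w, 0 <= f w) -> (forall w, f w <= g w) ->
  \int[mu]_w f w <= \int[mu]_w g w.
Proof.
move=> f0 fg; have g0 w : 0 <= g w by exact: le_trans (f0 w) (fg w).
rewrite !ge0_integralE // !patch_setT.
apply: ereal_sup_le => _ [h hf <-]; exists h => //= w.
exact: le_trans (hf w) (fg w).
Qed.

Lemma nneseries_indic_ge {a : nat -> R} {F : nat -> set T} {w : T} {n : nat} :
  (forall n, 0 <= a n)%R -> F n w ->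
  (a n.+1)%:E <= \sum_(k <oo) (a k.+1 * \1_(F k) w)%:E.
Proof.
move=> a0 Fnw.
have term0 k : 0 <= (a k.+1 * \1_(F k) w)%:E by rewrite lee_fin mulr_ge0 // indicE.
apply: le_trans (nneseries_lim_ge n.+1 (fun k _ _ => term0 k)).
rewrite big_nat_recr //= indicE mem_set // mulr1 lee_paddl //.
exact: sume_ge0.
Qed.

(* If [F n.+1] is the first layer missing [w], then [y <= a n.+1] is one term
   of the series; if [w] lies in every layer, the series diverges. *)
Lemma le_nneseries_indic (a : nat -> R) (F : nat -> set T) (y : \bar R) (w : T) :
  (forall n, 0 <= a n)%R -> (forall r : R, exists n, r <= a n.+1)%R ->
  F 0%N w -> (forall n, ~ F n w -> y <= (a n)%:E) ->
  y <= \sum_(n <oo) (a n.+1 * \1_(F n) w)%:E.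
Proof.
move=> a0 a_unbounded F0 yF.
have [allF | /existsNP[m nFm]] := pselect (forall n, F n w).
  suff -> : \sum_(n <oo) (a n.+1 * \1_(F n) w)%:E = +oo by rewrite leey.
  apply/eqyP => r _; have [n rn] := a_unbounded r.
  by apply: le_trans (nneseries_indic_ge a0 (allF n)); rewrite lee_fin.
elim: m nFm => [//|m IH nFm].
have [Fm|] := pselect (F m w); last exact: IH.
exact: le_trans (yF _ nFm) (nneseries_indic_ge a0 Fm).
Qed.

Lemma nneseries_geometric_lty (a z : R) :
  (0 <= a)%R -> (0 <= z < 1)%R -> \sum_(n <oo) (geometric a z n)%:E < +oo.
Proof.
move=> a0 /andP[z0 z1].
apply: (@le_lt_trans _ _ (a / (1 - z))%:E); last exact: ltry.
apply: lime_le.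
  by apply: is_cvg_nneseries => n _ _; rewrite lee_fin geometric_ge0.
apply: nearW => n; rewrite sumEFin lee_fin.
have -> : (\sum_(0 <= i < n) geometric a z i = series (geometric a z) n)%R by [].
rewrite geometric_seriesE ?lt_eqF //=.
rewrite ler_pM2r ?invr_gt0 ?subr_gt0 // mulrBr mulr1 lerBlDr lerDl.
by rewrite mulr_ge0 // exprn_ge0.
Qed.

Lemma integral_lty_of_exponential_tails (F : nat -> set T) (f : T -> \bar R)
    (C c k : R) :
  (0 < k)%R -> (k < c)%R -> (forall n, measurable (F n)) ->
  (forall n, mu (F n) <= (C * expR (- (c * n%:R)))%:E) ->
  (forall w, F 0%N w) -> (forall w, 0 <= f w) ->
  (forall n w, ~ F n w -> f w <= (expR (k * n%:R))%:E) ->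
  \int[mu]_w f w < +oo.
Proof.
move=> k0 kc mF muF F0 f0 fF.
have C0 : (0 <= C)%R.
  by have := le_trans (measure_ge0 mu (F 0%N)) (muF 0%N); rewrite mulr0 oppr0 expR0 mulr1.
pose a n := expR (k * n%:R).
have a_unbounded r : exists n, (r <= a n.+1)%R.
  exists (Num.truncn (r / k)); apply: le_trans (expR_ge1Dx _).
  by have := truncnS_gt (r / k); rewrite ltr_pdivrMr // mulrC; lra.
have f_le w : f w <= \sum_(n <oo) (a n.+1 * \1_(F n) w)%:E.
  exact: le_nneseries_indic (fun n => expR_ge0 _) a_unbounded (F0 w) (fF^~ w).
apply: le_lt_trans (ge0_le_integral_nonmeasurable f0 f_le) _.
have term0 n w : 0 <= (a n.+1 * \1_(F n) w)%:E.
  by rewrite lee_fin mulr_ge0 ?expR_ge0 // indicE.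
have mterm n : measurable_fun setT (fun w => (a n.+1 * \1_(F n) w)%:E : \bar R).
  apply/measurable_EFinP.
  exact/measurable_funM/measurable_indic.
rewrite integral_nneseries //.
apply: le_lt_trans (nneseries_geometric_lty (C * expR k) (expR (k - c)) _ _).
- apply: lee_nneseries => [n _ _|n _]; first exact: integral_ge0.
  rewrite (integralZl_indic _ (fun _ => F n)) //; last by rewrite ltNge expR_ge0.
  rewrite integral_indic // setIT.
  apply: (@le_trans _ _ ((a n.+1)%:E * (C * expR (- (c * n%:R)))%:E)).
    by apply: lee_wpmul2l; [rewrite lee_fin expR_ge0 | exact: muF].
  rewrite -EFinM lee_fin.
  suff -> : (a n.+1 * (C * expR (- (c * n%:R))) =
             geometric (C * expR k) (expR (k - c)) n)%R by [].
  rewrite /geometric /a /= -expRM_natr mulrCA -expRD -mulrA -expRD.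
  by congr (_ * expR _)%R; rewrite -addn1 natrD; ring.
- by rewrite mulr_ge0 // expR_ge0.
- by rewrite expR_ge0 expR_lt1 subr_lt0.
Qed.

End exponential_tails.

Section paths.
Context {d : nat} {R : realType}.
Implicit Types (f : edge d -> R) (x : vtx d) (s : seq (step d)).

Lemma psum_add_cst f c x s :
  psum (fun e => f e + c) x s = psum f x s + c * (size s)%:R.
Proof.
elim: s x => [|st s IH] x /=; first by rewrite mulr0 addr0.
by rewrite IH -addn1 natrD mulrDr mulr1; lra.
Qed.

Lemma psum_ge0 f x s : (forall e, 0 <= f e) -> 0 <= psum f x s.
Proof. by move=> f0; elim: s x => [|st s IH] x //=; rewrite addr_ge0. Qed.

Lemma measurable_psum dT (T : measurableType dT) (W : T -> edge d -> R) x s :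
  (forall e, measurable_fun setT (W^~ e)) ->
  measurable_fun setT (fun w => psum (W w) x s).
Proof.
move=> mW; elim: s x => [|st s IH] x /=; first exact: measurable_cst.
exact: measurable_funD.
Qed.

Definition long_cheap_path (w : edge d -> R) (delta : R) (n : nat) :=
  exists s : seq (step d), self_avoiding (origin d) s /\ (n <= size s)%N /\
    psum w (origin d) s <= delta * (size s)%:R.

Lemma measurable_long_cheap_path dT (T : measurableType dT)
    (W : T -> edge d -> R) (delta : R) (n : nat) :
  (forall e, measurable_fun setT (W^~ e)) ->
  measurable [set w | long_cheap_path (W w) delta n].
Proof.
move=> mW; apply: measurable_exists => s /=.
have [[sa ns]|long_sa] := pselect (self_avoiding (origin d) s /\ (n <= size s)%N).
- rewrite (_ : [set w | _] = setT `&` (fun w => psum (W w) (origin d) s) @^-1`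
                                        `]-oo, delta * (size s)%:R]).
    exact: measurable_psum.
  by apply/seteqP; split=> w /=; rewrite in_itv /=; [case=> _ [] | case].
- rewrite (_ : [set w | _] = set0) //.
  by apply/seteqP; split=> w // [sa [ns _]]; apply: long_sa.
Qed.

Lemma psum_ge_not_cheap (t : edge d -> R) (r0 b delta : R) n
    (x : vtx d) (s : seq (step d)) :
  (forall e, r0 <= t e) -> 0 < delta -> - r0 - delta <= b ->
  ~ ((n <= size s)%N /\ psum (fun e => t e - r0) x s <= delta * (size s)%:R) ->
  - (delta * n%:R) <= psum (fun e => t e + b) x s.
Proof.
move=> t_ge d0 hb not_cheap.
have -> : psum (fun e => t e + b) x s =
          psum (fun e => t e - r0) x s + (r0 + b) * (size s)%:R.
  by rewrite -psum_add_cst; congr psum; apply: funext => e; ring.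
have q0 : 0 <= psum (fun e => t e - r0) x s.
  by apply: psum_ge0 => e; rewrite subr_ge0.
have shift : - delta * (size s)%:R <= (r0 + b) * (size s)%:R.
  by apply: ler_wpM2r => //; lra.
have [ns|sn] := leqP n (size s).
- have cheap_fails : delta * (size s)%:R < psum (fun e => t e - r0) x s.
    by rewrite ltNge; apply/negP => cheap; apply: not_cheap.
  have : 0 <= delta * n%:R by rewrite mulr_ge0 // ltW.
  lra.
- have : delta * (size s)%:R <= delta * n%:R.
    by rewrite ler_pM2l // ler_nat ltnW.
  lra.
Qed.

Lemma A_b_le (t : edge d -> R) (b L : R) :
  0 <= L -> (forall s, self_avoiding 0 s -> - L <= psum (fun e => t e + b) 0 s) ->
  (A_b t b <= (2 * L)%:E)%E.
Proof.
move=> L0 psum_ge; rewrite /A_b EFinM; apply: lee_wpmul2l => //.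
apply: ge_ereal_sup => _ [x _ <-].
rewrite /eneg ge_max lee_fin L0 andbT leeNl -EFinN.
by apply: le_ereal_inf_tmp => _ [s [sa _] <-]; rewrite lee_fin; exact: psum_ge.
Qed.

Lemma A_b_le_not_long_cheap (t : edge d -> R) (r0 b delta : R) n :
  (forall e, r0 <= t e) -> 0 < delta -> - r0 - delta <= b ->
  ~ long_cheap_path (fun e => t e - r0) delta n ->
  (A_b t b <= (2 * (delta * n%:R))%:E)%E.
Proof.
move=> t_ge d0 hb no_cheap.
apply: A_b_le => [|s sa]; first by rewrite mulr_ge0 // ltW.
by apply: psum_ge_not_cheap => // -[ns cheap]; apply: no_cheap; exists s.
Qed.

End paths.

Theorem lemmaA3 (R : realType) (d : nat) (dT : measure_display)
  (T : measurableType dT) (P : probability T R) (t : edge d -> T -> R)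
  (r0 delta : R) :
  (2 <= d)%N ->
  iid P t ->
  (forall e, ess_inf P (fun w => (t e w)%:E) = r0%:E) ->
  0 <= r0 ->
  (forall e, P (t e @^-1` [set r0]) < (p_c R d)%:E)%E ->
  0 < delta ->
  (exists C c1 : R, 0 < C /\ 0 < c1 /\
     forall n : nat,
       (P [set w | exists s : seq (step d),
                     self_avoiding (origin d) s /\ (n <= size s)%N /\
                     (psum (fun e => t e w - r0) (origin d) s <= delta * (size s)%:R)%R]
        <= (C * expR (- (c1 * n%:R)))%R%:E)%E) ->
  exists s : R, 0 < s /\
    forall b : R, - r0 - delta <= b ->
      (\int[P]_w expeR (s%:E * A_b (fun e => t e w) b) < +oo)%E.
Proof.
move=> _ [mt _] ess_inf_t _ _ d0 [C [c1 [_ [c10 tail]]]].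
have [N [mN PN0 N_bad]] : \forall w \ae P, forall e, r0 <= t e w.
  by apply: ae_ge_ess_inf => e; rewrite ess_inf_t.
have t_ge w : ~ N w -> forall e, r0 <= t e w by move=> Nw; exact: contra_notP (@N_bad w) Nw.
pose cheap n := [set w | long_cheap_path (fun e => t e w - r0) delta n].
have mcheap n : measurable (cheap n).
  by apply: measurable_long_cheap_path => e; exact: measurable_funB.
exists (c1 / (4 * delta)); split=> [|b hb]; first by rewrite divr_gt0 // mulr_gt0.
apply: (@integral_lty_of_exponential_tails _ _ _ _ (fun n => cheap n `|` N) _ C c1 (c1 / 2)).
- by rewrite divr_gt0.
- lra.
- by move=> n; exact: measurableU.
- by move=> n; rewrite measureU0 //; exact: tail.
- by move=> w; left; exists [::]; rewrite /= mulr0.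
- by move=> w; exact: expeR_ge0.
move=> n w /not_orP[no_cheap /t_ge t_ge_w].
apply: (@le_trans _ _ (expeR ((c1 / (4 * delta))%:E * (2 * (delta * n%:R))%:E))).
  rewrite lee_expeR; apply: lee_wpmul2l; first by rewrite lee_fin divr_ge0 ?mulr_ge0 ?ltW.
  exact: A_b_le_not_long_cheap.
rewrite -EFinM lee_fin (_ : c1 / (4 * delta) * (2 * (delta * n%:R)) = c1 / 2 * n%:R) //.
by field; exact: lt0r_neq0.
Qed.
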